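(* For every integer $n\ge 2$, let $a_o$ (resp. $a_e$) be the total number of odd (resp. even) parts, counted with multiplicity, over all partitions in $\mathcal{H}_n$. Then $$a_o=(n+2)\cdot 2^{n-3}\qquad\text{and}\qquad a_e=n\cdot 2^{n-3}.$$
   Context: A partition is a finite nonempty weakly decreasing sequence $\lambda=(\lambda_1,\ldots,\lambda_k)$ of positive integers; $\ell(\lambda)=k$. The perimeter is $\Gamma(\lambda)=\lambda_1+\ell(\lambda)-1$; $\mathcal{H}_n$ is the set of partitions with perimeter $n$. *)

From mathcomp Require Import all_boot.
Set Implicit Arguments. Unset Strict Implicit. Unset Printing Implicit Defensive.

Definition is_partition (s : seq nat) : bool :=
  [&& s != [::], sorted geq s & all (fun x => 0 < x) s].

Definition perimeter (s : seq nat) : nat := head 0 s + size s - 1.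

Fixpoint seqs_len (m k : nat) : seq (seq nat) :=
  if k is k'.+1 then [seq x :: t | x <- iota 1 m, t <- seqs_len m k'] else [:: [::]].

Definition seqs_upto (m k : nat) : seq (seq nat) :=
  flatten [seq seqs_len m j | j <- iota 0 k.+1].

(* H_n: all partitions of perimeter n.  Any such partition has all parts <= n
   and length <= n, so it occurs (exactly once) in seqs_upto n n. *)
Definition H (n : nat) : seq (seq nat) :=
  [seq s <- seqs_upto n n | is_partition s && (perimeter s == n)].

Definition a_odd (n : nat) : nat := \sum_(s <- H n) count odd s.
Definition a_even (n : nat) : nat := \sum_(s <- H n) count (fun x => ~~ odd x) s.

From mathcomp Require Import all_boot zify.

Set Implicit Arguments.
Unset Strict Implicit.
Unset Printing Implicit Defensive.

(* Every partition of perimeter n + 2 arises from a unique partition of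
   perimeter n + 1, either by appending a part 1 (when its smallest part is 1)
   or by adding 1 to every part (otherwise).  Hence |H_(n+1)| = 2^n, and since
   appending 1 adds one odd part while adding 1 to every part swaps parities,
   a_o(n+2) = a_o(n+1) + 2^n + a_e(n+1) and a_e(n+2) = a_e(n+1) + a_o(n+1),
   which the closed forms satisfy. *)

Lemma mem_seqs_len m k s :
  (s \in seqs_len m k) = (size s == k) && all (fun x => 0 < x <= m) s.
Proof.
elim: k s => [|k IH] [|a t] //.
- by apply/allpairsP => -[[x y] /= [_ _]].
- apply/allpairsP/idP => [[[x y] /= [Hx Hy [-> ->]]] | ].
    by move: Hx Hy; rewrite mem_iota IH eqSS => /andP[-> Hx] /andP[-> ->]; rewrite andbT; lia.
  rewrite eqSS => /and3P[Hs Ha Ht]; exists (a, t) => /=; split => //.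
    by rewrite mem_iota; lia.
  by rewrite IH Hs.
Qed.

Lemma uniq_seqs_len m k : uniq (seqs_len m k).
Proof.
elim: k => [|k IH] //=.
apply: allpairs_uniq => //; first exact: iota_uniq.
by move=> [x y] [x' y'] _ _ /= [-> ->].
Qed.

Lemma seqs_uptoS m k : seqs_upto m k.+1 = seqs_upto m k ++ seqs_len m k.+1.
Proof. by rewrite /seqs_upto -addn1 iotaD map_cat flatten_cat /= cats0. Qed.

Lemma mem_seqs_upto m k s :
  (s \in seqs_upto m k) = (size s <= k) && all (fun x => 0 < x <= m) s.
Proof.
elim: k => [|k IH]; first by case: s.
rewrite seqs_uptoS mem_cat IH mem_seqs_len.
by case: (all _ s); rewrite ?andbF ?andbT //; lia.
Qed.

Lemma uniq_seqs_upto m k : uniq (seqs_upto m k).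
Proof.
elim: k => [|k IH] //.
rewrite seqs_uptoS cat_uniq IH uniq_seqs_len andbT.
by apply/hasPn => s; rewrite mem_seqs_len mem_seqs_upto => /andP[/eqP -> _]; rewrite ltnn.
Qed.

Lemma partition_head_max a t : is_partition (a :: t) -> all (fun x => x <= a) t.
Proof. by case/and3P => _ /=; rewrite path_sortedE //; [case/andP | exact: rev_trans leq_trans]. Qed.

Lemma mem_H n (s : seq nat) : (s \in H n) = is_partition s && (perimeter s == n).
Proof.
rewrite mem_filter; case Hp: (is_partition s) => //=.
case: eqP => //= <-; rewrite mem_seqs_upto.
case: s Hp => [|a t] Hp //; have /allP Hmax := partition_head_max Hp.
case/and3P: Hp => _ _ /= /andP[Ha /allP Ht].
rewrite /perimeter /=; apply/and3P; split; [lia | lia |].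
by apply/allP => x xt; rewrite Ht //=; have := Hmax x xt; lia.
Qed.

Lemma uniq_H n : uniq (H n).
Proof. exact/filter_uniq/uniq_seqs_upto. Qed.

Lemma H_parts_gt0 n t : t \in H n -> all (leq 1) t.
Proof. by rewrite mem_H => /andP[/and3P[]]. Qed.

Lemma mem_H_map_succn n t : all (leq 1) t -> (map succn t \in H n.+1) = (t \in H n).
Proof.
rewrite !mem_H; case: t => [|a t] // /andP[Ha Hpos].
rewrite /is_partition /perimeter /= path_map all_map size_map Ha.
have -> : all (leq 1) t by [].
have -> : all (preim succn (leq 1)) t by apply/allP.
by rewrite !andbT addSn subSS subn0 addnS subn1 eqSS.
Qed.

Lemma mem_H_rcons1 n t : (rcons t 1 \in H n.+2) = (t \in H n.+1).
Proof.
rewrite !mem_H; case: t => [|a t] //.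
rewrite /is_partition /perimeter /= rcons_path all_rcons size_rcons !addnS !subn1 /= eqSS.
case Ha: (0 < a); case Ht: (all (leq 1) t); rewrite ?andbF //.
have Hpos : all (leq 1) (a :: t) by rewrite /= Ha.
by rewrite (allP Hpos _ (mem_last a t)) !andbT.
Qed.

Lemma partition_rcons1_or_ge2 s :
  is_partition s -> (exists t, s = rcons t 1) \/ all (leq 2) s.
Proof.
case/lastP: s => [|t x] // /and3P[_].
rewrite (sorted_pairwise (rev_trans leq_trans)) pairwise_rcons all_rcons.
move=> /andP[/allP Hmin _] /andP[Hx _].
have [-> | x_neq1] := eqVneq x 1; first by left; exists t.
right; rewrite all_rcons ltn_neqAle eq_sym x_neq1 Hx /=.
by apply/allP => y /Hmin /=; lia.
Qed.

Lemma perm_H_rec n :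
  perm_eq (H n.+2) ([seq rcons t 1 | t <- H n.+1] ++ [seq map succn t | t <- H n.+1]).
Proof.
apply: uniq_perm; first exact: uniq_H.
  rewrite cat_uniq !map_inj_uniq ?uniq_H ?andbT //; [|exact: inj_map succn_inj|exact: rcons_injl].
  apply/hasPn => _ /mapP[u /H_parts_gt0 /allP u_gt0 ->]; apply/mapP => -[t _ Heq].
  have /mapP[y /u_gt0] : 1 \in map succn u by rewrite Heq mem_rcons mem_head.
  by case: y.
move=> s; rewrite mem_cat; apply/idP/orP => [Hs | [] /mapP[t Ht ->]].
- move: (Hs); rewrite mem_H => /andP[/partition_rcons1_or_ge2[[t Hst] | s_ge2] _].
    by left; apply/mapP; exists t; rewrite // -mem_H_rcons1 -Hst.
  right; apply/mapP.
  have succn_predn : map succn (map predn s) = s.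
    by rewrite -map_comp map_id_in // => y /(allP s_ge2); case: y.
  have predn_gt0 : all (leq 1) (map predn s).
    by rewrite all_map; apply/allP => y /(allP s_ge2); case: y => [|[]].
  by exists (map predn s); rewrite ?succn_predn // -(mem_H_map_succn _ predn_gt0) succn_predn.
- by rewrite (mem_H_rcons1 n t).
- by rewrite (mem_H_map_succn n.+1 (H_parts_gt0 Ht)).
Qed.

Lemma H1E : H 1 = [:: [:: 1]].
Proof. by []. Qed.

Lemma size_H n : size (H n.+1) = 2 ^ n.
Proof.
elim: n => [|n IH]; first by rewrite H1E.
by rewrite (perm_size (perm_H_rec n)) size_cat !size_map IH expnS mul2n addnn.
Qed.

Lemma a_odd_rec n : a_odd n.+2 = a_odd n.+1 + 2 ^ n + a_even n.+1.
Proof.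
rewrite /a_odd /a_even (perm_big _ (perm_H_rec n)) big_cat !big_map /=.
under eq_bigr do rewrite -cats1 count_cat.
under [X in _ + X]eq_bigr do rewrite count_map.
by rewrite big_split /= sum1_size size_H.
Qed.

Lemma a_even_rec n : a_even n.+2 = a_even n.+1 + a_odd n.+1.
Proof.
rewrite /a_odd /a_even (perm_big _ (perm_H_rec n)) big_cat !big_map /=.
under eq_bigr do rewrite -cats1 count_cat addn0.
under [X in _ + X]eq_bigr do rewrite count_map.
by congr (_ + _); apply: eq_bigr => t _; apply: eq_count => x; rewrite /= negbK.
Qed.

Theorem corollary2p6 (n : nat) : 2 <= n ->
  8 * a_odd n = (n + 2) * 2 ^ n /\ 8 * a_even n = n * 2 ^ n.
Proof.
case: n => [|[|n]] // _.
elim: n => [|n [IHo IHe]]; first by rewrite a_odd_rec a_even_rec /a_odd /a_even H1E !big_seq1.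
rewrite (a_odd_rec n.+1) (a_even_rec n.+1); move: IHo IHe; rewrite !expnS; split; nia.
Qed.
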